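(* Let $N,M_t,M_r$ be positive integers, $P_0>0$, $\sigma^2>0$, $\alpha\in\mathbb C\setminus\{0\}$, $L>0$, $\theta,\theta_1,\theta_2\in\mathbb R$, and let $\mathbf G_t=\sqrt{L}\,\mathbf a(\theta_2)\mathbf c^T(\theta_1)$, $\mathbf G_r=\sqrt{L}\,\mathbf b(\theta_1)\mathbf a^T(\theta_2)$. If $N>1/\sqrt{L}$, then $\mathrm{SNR}_1^\star>\mathrm{SNR}_2^\star$, where $\mathrm{SNR}_i^\star=\max_{\mathbf R,\mathbf\Phi}\mathrm{SNR}_i(\mathbf R,\mathbf\Phi)$ with the maximum over positive semidefinite $\mathbf R\in\mathbb C^{M_t\times M_t}$ with $\mathrm{tr}(\mathbf R)\le P_0$ and $\mathbf\Phi=\mathrm{diag}(e^{j\phi_1},\dots,e^{j\phi_N})$, $\phi_n\in\mathbb R$.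
   Context: $j=\sqrt{-1}$. Fix $\hat d>0$, $\lambda>0$. For a positive integer $K$, $\mathbf s_K(\theta)\in\mathbb C^K$ has $k$-th entry $e^{j\pi(2k-K-1)\hat d\sin\theta/\lambda}$. Set $\mathbf a(\theta)=\mathbf s_N(\theta)$, $\mathbf b(\theta)=\mathbf s_{M_r}(\theta)$, $\mathbf c(\theta)=\mathbf s_{M_t}(\theta)$. Define $\mathrm{SNR}_1(\mathbf R,\mathbf\Phi)=\frac{|\alpha|^2\|\mathbf G_r\mathbf\Phi^T\mathbf a(\theta)\|^2\,\mathbf a^T(\theta)\mathbf\Phi\mathbf G_t\mathbf R\mathbf G_t^H\mathbf\Phi^H\mathbf a^*(\theta)}{\sigma^2}$, $\mathrm{SNR}_2(\mathbf R,\mathbf\Phi)=\frac{|\alpha|^2\|\mathbf b(\theta)\|^2\,\mathbf a^T(\theta)\mathbf\Phi\mathbf G_t\mathbf R\mathbf G_t^H\mathbf\Phi^H\mathbf a^*(\theta)}{\sigma^2}$. *)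

From HB Require Import structures.
From mathcomp Require Import all_boot all_order all_algebra.
From mathcomp Require Import complex.
From mathcomp Require Import classical_sets reals trigo.
Set Implicit Arguments. Unset Strict Implicit. Unset Printing Implicit Defensive.
Import Order.TTheory GRing.Theory Num.Theory Num.Def.
Local Open Scope ring_scope.
Local Open Scope complex_scope.
Local Open Scope classical_set_scope.

Section Defs.
Variable R : realType.
Local Notation C := R[i].

Definition expj (x : R) : C := Complex (cos x) (sin x).

Definition hermT m n (A : 'M[C]_(m, n)) : 'M[C]_(n, m) := (map_mx conjC A)^T.
Definition conjM m n (A : 'M[C]_(m, n)) : 'M[C]_(m, n) := map_mx conjC A.

(* steering vector s_K(theta): k-th entry (k = 1..K) is
   exp(j pi (2k - K - 1) dhat sin(theta) / lambda); here i = k - 1. *)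
Definition steer (dhat lam : R) (K : nat) (th : R) : 'cV[C]_K :=
  \col_(i < K) expj (pi * ((2 * i.+1)%:R - K%:R - 1) * dhat * sin th / lam).

Definition norm2 K (v : 'cV[C]_K) : R := \sum_(i < K) (complex.Re (v i 0 * conjC (v i 0))).

Definition psd M (Rm : 'M[C]_M) : Prop :=
  hermT Rm = Rm /\ forall x : 'cV[C]_M, 0 <= (hermT x *m Rm *m x) 0 0.

Definition phase_mx N (phi : 'I_N -> R) : 'M[C]_N := diag_mx (\row_n expj (phi n)).

Definition quadTx N Mt (a : 'cV[C]_N) (Phi : 'M[C]_N) (Gt : 'M[C]_(N, Mt))
  (Rm : 'M[C]_Mt) : C :=
  (a^T *m Phi *m Gt *m Rm *m hermT Gt *m hermT Phi *m conjM a) 0 0.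

Definition SNR1 N Mt Mr (alpha : C) (sigma2 : R) (a : 'cV[C]_N) (b : 'cV[C]_Mr)
  (Gt : 'M[C]_(N, Mt)) (Gr : 'M[C]_(Mr, N)) (Rm : 'M[C]_Mt) (Phi : 'M[C]_N) : C :=
  `|alpha| ^+ 2 * (norm2 (Gr *m Phi^T *m a))%:C * quadTx a Phi Gt Rm / sigma2%:C.

Definition SNR2 N Mt Mr (alpha : C) (sigma2 : R) (a : 'cV[C]_N) (b : 'cV[C]_Mr)
  (Gt : 'M[C]_(N, Mt)) (Gr : 'M[C]_(Mr, N)) (Rm : 'M[C]_Mt) (Phi : 'M[C]_N) : C :=
  `|alpha| ^+ 2 * (norm2 b)%:C * quadTx a Phi Gt Rm / sigma2%:C.

(* The SNR is real on the feasible set; we take its real part and the sup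
   (which is attained: the feasible set is compact). *)
Definition SNRstar N Mt (P0 : R)
  (snr : 'M[C]_Mt -> 'M[C]_N -> C) : R :=
  sup [set x : R | exists (Rm : 'M[C]_Mt) (phi : 'I_N -> R),
        psd Rm /\ \tr Rm <= P0%:C /\ x = complex.Re (snr Rm (phase_mx phi))].

End Defs.

From HB Require Import structures.
From mathcomp Require Import all_boot all_order all_algebra.
From mathcomp Require Import complex.
From mathcomp Require Import boolp classical_sets reals trigo.
From mathcomp Require Import ring.
Set Implicit Arguments.
Unset Strict Implicit.
Unset Printing Implicit Defensive.
Import Order.TTheory GRing.Theory Num.Theory Num.Def.
Local Open Scope ring_scope.
Local Open Scope complex_scope.

(* For the rank-one channels G_t = sqrt L a(th2) c(th1)^T and
   G_r = sqrt L b(th1) a(th2)^T, both SNRs see Phi only through the gain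
   g = a(th)^T Phi a(th2) and R only through q = c^T R c^*:
   SNR_2 = kappa L |g|^2 q and SNR_1 = kappa L^2 |g|^4 q with
   kappa = |alpha|^2 M_r / sigma^2.  Since c has unimodular entries,
   q <= M_t tr R <= M_t P0, with equality for R = (P0 / M_t) c^* c^T; and
   |g| <= N, with equality for the phases aligning a(th) and a(th2).  The two
   optima are thus kappa L N^2 M_t P0 and kappa L^2 N^4 M_t P0, and their
   ratio L N^2 exceeds 1 exactly when N > 1 / sqrt L. *)

Section HermitianForms.
Variable R : realType.
Local Notation C := R[i].

Lemma hermTE m n (A : 'M[C]_(m, n)) i j : hermT A i j = conjC (A j i).
Proof. by rewrite !mxE. Qed.

Lemma hermT_mul m n p (A : 'M[C]_(m, n)) (B : 'M[C]_(n, p)) :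
  hermT (A *m B) = hermT B *m hermT A.
Proof. by rewrite /hermT map_mxM trmx_mul. Qed.

Lemma hermTZ m n k (A : 'M[C]_(m, n)) : hermT (k *: A) = conjC k *: hermT A.
Proof. by apply/matrixP=> i j; rewrite !mxE rmorphM. Qed.

Lemma hermTB m n (A B : 'M[C]_(m, n)) : hermT (A - B) = hermT A - hermT B.
Proof. by apply/matrixP=> i j; rewrite !mxE rmorphB. Qed.

Lemma hermTK m n (A : 'M[C]_(m, n)) : hermT (hermT A) = A.
Proof. by apply/matrixP=> i j; rewrite !mxE conjCK. Qed.

Lemma hermT_tr m n (A : 'M[C]_(m, n)) : hermT A^T = conjM A.
Proof. by apply/matrixP=> i j; rewrite !mxE. Qed.

Lemma hermT_conjM m n (A : 'M[C]_(m, n)) : hermT (conjM A) = A^T.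
Proof. by apply/matrixP=> i j; rewrite !mxE conjCK. Qed.

Lemma mulmx11E (P Q : 'M[C]_1) : (P *m Q) 0 0 = P 0 0 * Q 0 0.
Proof. by rewrite mxE big_ord1. Qed.

Lemma norm2C n (w : 'cV[C]_n) : (norm2 w)%:C = \sum_i `|w i 0| ^+ 2.
Proof.
rewrite /norm2 rmorph_sum; apply: eq_bigr => i _; rewrite normCK.
exact/RRe_real/ger0_real/mul_conjC_ge0.
Qed.

Lemma norm2Z n k (w : 'cV[C]_n) : (norm2 (k *: w))%:C = `|k| ^+ 2 * (norm2 w)%:C.
Proof.
by rewrite !norm2C big_distrr; apply: eq_bigr => i _; rewrite mxE normrM exprMn.
Qed.

Definition sform {n} (Rm : 'M[C]_n) (u v : 'cV[C]_n) : C := (hermT u *m Rm *m v) 0 0.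

Lemma psd_scale_outer n (k : R) (x : 'cV[C]_n) : 0 <= k -> psd (k%:C *: (x *m hermT x)).
Proof.
move=> k_ge0; split; first by rewrite hermTZ hermT_mul hermTK geC0_conj ?lecR.
move=> z; rewrite -scalemxAr -scalemxAl !mulmxA.
have -> : hermT z *m x *m hermT x *m z = (hermT z *m x) *m hermT (hermT z *m x).
  by rewrite hermT_mul hermTK !mulmxA.
by rewrite mxE mulmx11E hermTE mulr_ge0 ?lecR ?mul_conjC_ge0.
Qed.

Lemma sform_scale_outer n (k : C) (x : 'cV[C]_n) :
  sform (k *: (x *m hermT x)) x x = k * (hermT x *m x) 0 0 ^+ 2.
Proof.
rewrite /sform -scalemxAr -scalemxAl mxE.
by rewrite (_ : _ *m _ *m x = (hermT x *m x) *m (hermT x *m x)) ?mulmx11E ?mulmxA.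
Qed.

Variables (n : nat) (Rm : 'M[C]_n).

Lemma sformBl u v w : sform Rm (u - v) w = sform Rm u w - sform Rm v w.
Proof. by rewrite /sform -!trace_mx11 hermTB !mulmxBl linearB. Qed.

Lemma sformBr u v w : sform Rm u (v - w) = sform Rm u v - sform Rm u w.
Proof. by rewrite /sform -!trace_mx11 mulmxBr linearB. Qed.

Lemma sformZl a u v : sform Rm (a *: u) v = conjC a * sform Rm u v.
Proof. by rewrite /sform hermTZ -!scalemxAl mxE. Qed.

Lemma sformZr a u v : sform Rm u (a *: v) = a * sform Rm u v.
Proof. by rewrite /sform -scalemxAr mxE. Qed.

Lemma sform_delta i j : sform Rm (delta_mx i 0) (delta_mx j 0) = Rm i j.
Proof.
rewrite /sform (_ : hermT _ = delta_mx 0 i); first by rewrite -rowE -colE !mxE.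
by apply/matrixP=> a b; rewrite !mxE rmorph_nat andbC.
Qed.

Lemma sformE u v : sform Rm u v = \sum_i \sum_j conjC (u i 0) * Rm i j * v j 0.
Proof.
rewrite /sform !mxE exchange_big; apply: eq_bigr => j _; rewrite !mxE big_distrl.
by apply: eq_bigr => i _; rewrite !mxE.
Qed.

Definition unimodular (x : 'cV[C]_n) := forall i, `|x i 0| = 1.

Lemma unimodular_conj_mul x : unimodular x -> forall i, conjC (x i 0) * x i 0 = 1.
Proof. by move=> x1 i; rewrite -normCKC x1 expr1n. Qed.

Lemma unimodular_conjM x : unimodular x -> unimodular (conjM x).
Proof. by move=> x1 i; rewrite mxE normcJ x1. Qed.

Lemma dot_unimodular x : unimodular x -> (hermT x *m x) 0 0 = n%:R.
Proof.
move=> x1; rewrite mxE (eq_bigr (fun _ => 1)) ?sumr_const ?card_ord // => i _.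
by rewrite !mxE unimodular_conj_mul.
Qed.

Lemma norm2_unimodular x : unimodular x -> norm2 x = n%:R.
Proof.
move=> x1; rewrite /norm2 (eq_bigr (fun _ => 1)) ?sumr_const ?card_ord // => i _.
by rewrite mulrC unimodular_conj_mul.
Qed.

Lemma psd_pair_ge0 x i j : psd Rm -> unimodular x ->
  0 <= Rm i i + Rm j j - conjC (x i 0) * Rm i j * x j 0
       - conjC (x j 0) * Rm j i * x i 0.
Proof.
move=> [_ Rm_ge0] x1; pose w : 'cV[C]_n := x i 0 *: delta_mx i 0 - x j 0 *: delta_mx j 0.
suff -> : Rm i i + Rm j j - conjC (x i 0) * Rm i j * x j 0
          - conjC (x j 0) * Rm j i * x i 0 = sform Rm w w by exact: Rm_ge0.
rewrite sformBl !sformBr !sformZl !sformZr !sform_delta.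
by ring: (unimodular_conj_mul x1 i) (unimodular_conj_mul x1 j).
Qed.

(* Summing the pair inequalities over all (i, j) gives 2 n tr Rm - 2 x^H Rm x >= 0. *)
Lemma sform_unimodular_le x : psd Rm -> unimodular x -> sform Rm x x <= n%:R * \tr Rm.
Proof.
move=> psdR x1; set t := fun i j => conjC (x i 0) * Rm i j * x j 0.
have sum_pairs : \sum_i \sum_j (Rm i i + Rm j j - t i j - t j i)
                 = (n%:R * \tr Rm - sform Rm x x) *+ 2.
  under eq_bigr do rewrite !sumrB big_split /=.
  rewrite !sumrB big_split /= [X in _ - X]exchange_big -/t -sformE.
  under eq_bigr do rewrite sumr_const card_ord.
  rewrite sumr_const card_ord sumrMnl -/(\tr Rm).
  (* [ring] does not reify [\tr], hence the generalization *)
  by move: (\tr Rm) (sform Rm x x) => T Q; ring.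
have : 0 <= (n%:R * \tr Rm - sform Rm x x) *+ 2.
  rewrite -sum_pairs; apply: sumr_ge0 => i _; apply: sumr_ge0 => j _.
  exact: psd_pair_ge0.
by rewrite pmulrn_lge0 // subr_ge0.
Qed.

End HermitianForms.

Lemma mul_sqr_gt1 (R : rcfType) (L x : R) : 0 < L -> 1 / Num.sqrt L < x -> 1 < L * x ^+ 2.
Proof.
move=> L_gt0 x_gt; have sqrtL_gt0 : 0 < Num.sqrt L by rewrite sqrtr_gt0.
have x_ge0 : 0 <= x by apply: le_trans (ltW x_gt); rewrite divr_ge0 ?ltW.
rewrite -(sqr_sqrtr (ltW L_gt0)) -exprMn expr_gt1 ?mulr_ge0 ?sqrtr_ge0 //.
by rewrite mulrC -ltr_pdivrMr.
Qed.

Section SteeringGain.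
Variable R : realType.
Local Notation C := R[i].

Lemma norm_expj (x : R) : `|expj x| = 1 :> C.
Proof. by rewrite normc_def /= cos2Dsin2 sqrtr1. Qed.

Lemma expjD (x y : R) : expj x * expj y = expj (x + y) :> C.
Proof.
rewrite /expj cosD sinD; simpc.
by apply/eqP; rewrite eq_complex /=; apply/andP; split; apply/eqP; ring.
Qed.

Lemma expj0 : expj 0 = 1 :> C.
Proof. by rewrite /expj cos0 sin0. Qed.

Definition gain N (u v : 'cV[C]_N) (Phi : 'M[C]_N) : C := (u^T *m Phi *m v) 0 0.

Lemma gain_phaseE N (u v : 'cV[C]_N) phi :
  gain u v (phase_mx phi) = \sum_n u n 0 * expj (phi n) * v n 0.
Proof.
by rewrite /gain /phase_mx mul_mx_diag !mxE; apply: eq_bigr => n _; rewrite !mxE.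
Qed.

Lemma gain_phase_le N (u v : 'cV[C]_N) phi :
  unimodular u -> unimodular v -> `|gain u v (phase_mx phi)| <= N%:R.
Proof.
move=> u1 v1; rewrite gain_phaseE; apply: le_trans (ler_norm_sum _ _ _) _.
rewrite (eq_bigr (fun _ => 1)) ?sumr_const ?card_ord // => n _.
by rewrite !normrM u1 v1 norm_expj !mulr1.
Qed.

Definition steer_phase (dhat lam : R) K (th : R) (i : 'I_K) : R :=
  pi * ((2 * i.+1)%:R - K%:R - 1) * dhat * sin th / lam.

Lemma steerE (dhat lam : R) K (th : R) i :
  steer dhat lam K th i 0 = expj (steer_phase dhat lam th i).
Proof. by rewrite mxE. Qed.

Lemma steer_unimodular (dhat lam : R) K (th : R) : unimodular (steer dhat lam K th).
Proof. by move=> i; rewrite steerE norm_expj. Qed.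

Lemma steer_gain_aligned (dhat lam : R) N (th th' : R) :
  exists phi, gain (steer dhat lam N th) (steer dhat lam N th') (phase_mx phi) = N%:R.
Proof.
exists (fun n => - (steer_phase dhat lam th n + steer_phase dhat lam th' n)).
rewrite gain_phaseE (eq_bigr (fun _ => 1)) ?sumr_const ?card_ord // => n _.
by rewrite !steerE !expjD opprD addrA subrr add0r addNr expj0.
Qed.

End SteeringGain.

Section RankOneChannel.
Variable R : realType.
Local Notation C := R[i].
Variables (N Mt Mr : nat) (a v : 'cV[C]_N) (Phi : 'M[C]_N).

Lemma gain_rank1_row (s : C) (c : 'cV[C]_Mt) :
  a^T *m Phi *m (s *: (v *m c^T)) = (s * gain a v Phi) *: c^T.
Proof.
by rewrite -scalemxAr mulmxA [a^T *m Phi *m v]mx11_scalar mul_scalar_mx scalerA.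
Qed.

Lemma rank1_col_gain (s : C) (b : 'cV[C]_Mr) :
  (s *: (b *m v^T)) *m Phi^T *m a = (s * gain a v Phi) *: b.
Proof.
have gainT : v^T *m (Phi^T *m a) = (a^T *m Phi *m v)^T by rewrite !trmx_mul trmxK.
rewrite -!scalemxAl -!mulmxA gainT [a^T *m Phi *m v]mx11_scalar.
by rewrite tr_scalar_mx mul_mx_scalar scalerA.
Qed.

Lemma quadTx_rank1 (s : C) (c : 'cV[C]_Mt) (Rm : 'M[C]_Mt) :
  quadTx a Phi (s *: (v *m c^T)) Rm
  = `|s * gain a v Phi| ^+ 2 * sform Rm (conjM c) (conjM c).
Proof.
set G := s *: (v *m c^T).
have -> : quadTx a Phi G Rm = (a^T *m Phi *m G *m Rm *m hermT (a^T *m Phi *m G)) 0 0.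
  by rewrite /quadTx !hermT_mul hermT_tr !mulmxA.
rewrite gain_rank1_row hermTZ hermT_tr normCK -!scalemxAl -scalemxAr scalerA mxE.
by rewrite /sform hermT_conjM.
Qed.

Variables (alpha : C) (sigma2 : R) (b : 'cV[C]_Mr) (c : 'cV[C]_Mt) (Rm : 'M[C]_Mt).

Lemma SNR2_rank1 (s : C) (Gr : 'M[C]_(Mr, N)) :
  SNR2 alpha sigma2 a b (s *: (v *m c^T)) Gr Rm Phi
  = `|alpha| ^+ 2 * (norm2 b)%:C / sigma2%:C
    * `|s * gain a v Phi| ^+ 2 * sform Rm (conjM c) (conjM c).
Proof. by rewrite /SNR2 quadTx_rank1; ring. Qed.

Lemma SNR1_rank1 (st sr : C) (br : 'cV[C]_Mr) :
  SNR1 alpha sigma2 a b (st *: (v *m c^T)) (sr *: (br *m v^T)) Rm Phi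
  = `|alpha| ^+ 2 * (norm2 br)%:C / sigma2%:C * `|sr * gain a v Phi| ^+ 2
    * `|st * gain a v Phi| ^+ 2 * sform Rm (conjM c) (conjM c).
Proof. by rewrite /SNR1 quadTx_rank1 rank1_col_gain norm2Z; ring. Qed.

End RankOneChannel.

Section Optimum.
Variable R : realType.
Local Notation C := R[i].

Lemma SNRstar_eq N Mt (P0 : R) (snr : 'M[C]_Mt -> 'M[C]_N -> C) (w : R) :
  (forall Rm phi, psd Rm -> \tr Rm <= P0%:C -> snr Rm (phase_mx phi) <= w%:C) ->
  (exists Rm phi, [/\ psd Rm, \tr Rm <= P0%:C & snr Rm (phase_mx phi) = w%:C]) ->
  SNRstar P0 snr = w.
Proof.
move=> snr_le [Rm0 [phi0 [psd0 tr0 snr0]]]; rewrite /SNRstar; set E := (X in sup X).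
have Ew : E w by exists Rm0, phi0; rewrite snr0.
have ub_w : ubound E w.
  move=> _ [Rm [phi [psdR [trR ->]]]].
  by have := snr_le Rm phi psdR trR; rewrite lecE => /andP[_].
apply/le_anti/andP; split; first by apply: ge_sup => //; exists w.
by apply: sup_upper_bound => //; split; exists w.
Qed.

Lemma SNRstar_gain_sformE N Mt (P0 : R) (k : C) e (u v : 'cV[C]_N) (x : 'cV[C]_Mt) :
  (0 < Mt)%N -> 0 <= k -> 0 <= P0 ->
  unimodular u -> unimodular v -> unimodular x ->
  (exists phi, gain u v (phase_mx phi) = N%:R) ->
  (SNRstar P0 (fun Rm Phi => k * `|gain u v Phi| ^+ e * sform Rm x x))%:C
  = k * N%:R ^+ e * (Mt%:R * P0%:C).
Proof.
move=> Mt_gt0 k_ge0 P0_ge0 u1 v1 x1 [phi0 gain0].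
have [r r_ge0 ->] : exists2 r : R, 0 <= r & k = r%:C.
  exists (complex.Re k); first by move: k_ge0; rewrite lecE => /andP[].
  by rewrite RRe_real ?ger0_real.
rewrite (SNRstar_eq (w := r * N%:R ^+ e * (Mt%:R * P0))).
- by rewrite !rmorphM rmorphXn !rmorph_nat.
- move=> Rm phi psdR trR; rewrite !rmorphM rmorphXn !rmorph_nat.
  apply: ler_pM; first by apply: mulr_ge0; rewrite ?lecR ?exprn_ge0.
  + exact: psdR.2.
  + apply: ler_wpM2l; first by rewrite lecR.
    by apply: lerXn2r; rewrite ?nnegrE ?ler0n ?gain_phase_le.
  + apply: le_trans (sform_unimodular_le psdR x1) _.
    by apply: ler_wpM2l; rewrite ?ler0n.
- have Mt_neq0 : Mt%:R != 0 :> C by rewrite pnatr_eq0 -lt0n.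
  exists ((P0 / Mt%:R)%:C *: (x *m hermT x)), phi0; split.
  + by apply/psd_scale_outer/divr_ge0; rewrite ?ler0n.
  + rewrite mxtraceZ mxtrace_mulC trace_mx11 dot_unimodular // fmorph_div.
    by rewrite rmorph_nat divfK.
  + rewrite sform_scale_outer dot_unimodular // gain0 normr_nat fmorph_div !rmorphM.
    by rewrite rmorphXn !rmorph_nat; field.
Qed.

End Optimum.

Theorem theorem1 (R : realType) (N Mt Mr : nat) (dhat lam P0 sigma2 L : R)
  (alpha : R[i]) (th th1 th2 : R) :
  (0 < N)%N -> (0 < Mt)%N -> (0 < Mr)%N ->
  0 < dhat -> 0 < lam -> 0 < P0 -> 0 < sigma2 -> alpha != 0 -> 0 < L ->
  let a := steer dhat lam N in
  let b := steer dhat lam Mr in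
  let c := steer dhat lam Mt in
  let Gt : 'M[R[i]]_(N, Mt) := (Num.sqrt L)%:C *: (a th2 *m (c th1)^T) in
  let Gr : 'M[R[i]]_(Mr, N) := (Num.sqrt L)%:C *: (b th1 *m (a th2)^T) in
  N%:R > 1 / Num.sqrt L ->
  SNRstar P0 (SNR2 alpha sigma2 (a th) (b th) Gt Gr)
    < SNRstar P0 (SNR1 alpha sigma2 (a th) (b th) Gt Gr).
Proof.
move=> N_gt0 Mt_gt0 Mr_gt0 _ _ P0_gt0 sigma2_gt0 alpha_neq0 L_gt0 a b c Gt Gr N_gt.
have a1 t : unimodular (a t) by exact: steer_unimodular.
have b1 t : unimodular (b t) by exact: steer_unimodular.
have x1 : unimodular (conjM (c th1)) by exact/unimodular_conjM/steer_unimodular.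
pose g := gain (a th) (a th2); pose k := `|alpha| ^+ 2 * Mr%:R / sigma2%:C * L%:C.
have k_gt0 : 0 < k by rewrite !mulr_gt0 ?invr_gt0 ?exprn_gt0 ?normr_gt0 ?ltcR ?ltr0n.
have gainL Phi : `|(Num.sqrt L)%:C * g Phi| ^+ 2 = L%:C * `|g Phi| ^+ 2.
  by rewrite normrM exprMn ger0_norm ?lecR ?sqrtr_ge0 // -rmorphXn sqr_sqrtr ?ltW.
have -> : SNR2 alpha sigma2 (a th) (b th) Gt Gr
          = fun Rm Phi => k * `|g Phi| ^+ 2 * sform Rm (conjM (c th1)) (conjM (c th1)).
  apply/funext=> Rm; apply/funext=> Phi.
  by rewrite SNR2_rank1 gainL norm2_unimodular // /k; ring.
have -> : SNR1 alpha sigma2 (a th) (b th) Gt Gr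
          = fun Rm Phi => k * L%:C * `|g Phi| ^+ 4 * sform Rm (conjM (c th1)) (conjM (c th1)).
  apply/funext=> Rm; apply/funext=> Phi.
  by rewrite SNR1_rank1 !gainL norm2_unimodular // /k; ring.
clearbody k.
have opt e k' : 0 <= k' ->
    (SNRstar P0 (fun Rm Phi => k' * `|g Phi| ^+ e * sform Rm (conjM (c th1)) (conjM (c th1))))%:C
    = k' * N%:R ^+ e * (Mt%:R * P0%:C).
  move=> k'_ge0; apply: (SNRstar_gain_sformE e Mt_gt0 k'_ge0 (ltW P0_gt0)) => //.
  exact: steer_gain_aligned.
have LN2 : 1 < L%:C * N%:R ^+ 2.
  by move: (mul_sqr_gt1 L_gt0 N_gt); rewrite -ltcR rmorphM rmorphXn rmorph_nat rmorph1.
rewrite -ltcR !opt ?mulr_ge0 ?lecR ?ltW // ltr_pM2r ?mulr_gt0 ?ltcR ?ltr0n //.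
by rewrite -mulrA ltr_pM2l // (_ : 4 = 2 + 2)%N // exprD mulrA ltr_pMl ?exprn_gt0 ?ltr0n.
Qed.
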